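(* Let $k$ be a positive integer such that $k+1$ is an odd prime. For every $\mathbf v\in N_k$ there exist $s\in\mathbb{Z}_{k+1}$ and $r\in\mathbb{Z}$ such that, working modulo $k+1$, every coordinate of $s\mathbf v+\mathbf r_k\!\left(\tfrac{r}{k+1}\right)$ lies in $\{1,\ldots,k-1\}$.
   Context: $\mathbb{Z}_{k+1}$ is the integers modulo $k+1$. $N_k:=\{\mathbf v\in\mathbb{Z}_{k+1}^k:\ \mathbf v\neq\mathbf 0 \text{ and } \mathbf v \text{ has at least one zero coordinate}\}$. For $x\in\mathbb{R}$, $\{x\}=x-\lfloor x\rfloor$ is the fractional part, and for $t\in\mathbb{R}$, $\mathbf r_k(t):=\big(\lfloor (k+1)\{t\}\rfloor,\lfloor (k+1)\{2t\}\rfloor,\ldots,\lfloor (k+1)\{kt\}\rfloor\big)\in\{0,\ldots,k\}^k$, reduced modulo $k+1$ when added to elements of $\mathbb{Z}_{k+1}^k$. *)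

From HB Require Import structures.
From mathcomp Require Import all_boot all_order all_algebra.
Set Implicit Arguments. Unset Strict Implicit. Unset Printing Implicit Defensive.
Import Order.TTheory GRing.Theory Num.Theory.
Local Open Scope ring_scope.

Definition fracq (x : rat) : rat := x - (Num.floor x)%:~R.

(* r_k(t) = (floor((k+1){t}), ..., floor((k+1){k t})), coordinate j : 'I_k
   corresponds to multiplier j+1; values are integers in {0..k}. *)
Definition rk (k : nat) (t : rat) (j : 'I_k) : int :=
  Num.floor ((k.+1)%:R * fracq ((j.+1)%:R * t)).

Definition rk_vec (k : nat) (t : rat) : 'rV['Z_k.+1]_k :=
  \row_(j < k) ((@rk k t j)%:~R : 'Z_k.+1).

Definition in_Nk (k : nat) (v : 'rV['Z_k.+1]_k) : Prop :=
  v != 0 /\ exists j : 'I_k, v ord0 j = 0.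

From Pilot Require Import Defs.
From HB Require Import structures.
From mathcomp Require Import all_boot all_order all_algebra.
From mathcomp Require Import all_fingroup all_solvable all_field zify ring.
Import Order.TTheory GRing.Theory Num.Theory FinRing.Theory.
Local Open Scope ring_scope.

(* Identify Z_(k+1) with the prime field F = F_p, p = k+1, and let a_j be the
   coordinates of v.  The j-th coordinate of s v + r_k(r/p) is s a_j + r (j+1),
   and it lies in {1, ..., k-1} iff it avoids 0 and -1.  Suppose no (s, r)
   works and let W be the set of slopes a_j / (j+1); as v is nonzero with a
   zero coordinate, 2 <= #|W| <= k.  For z outside W and x <> 0, the failure at
   (s, r) = (-1/x, z/x) shows that j |-> a_j - (j+1) z takes the value x, so it
   is a bijection onto F^*; comparing its product with that of j |-> j+1 (and
   using that k is even) gives prod_j (z - a_j/(j+1)) = 1.  Hence the monic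
   polynomial R = prod_j (X - a_j/(j+1)) of degree p-1 is the indicator of the
   complement of W, and summing it over F yields #|~: W| = -1 in F: p divides
   #|~: W| + 1, which lies in [2, k]. *)

(* Qualified: the unqualified [fracq] is rat.v's constructor from [int * int]. *)
Lemma fracq_natr_div (m d : nat) :
  (0 < d)%N -> Defs.fracq (m%:R / d%:R) = (m %% d)%:R / d%:R.
Proof.
move=> d_gt0; have d_neq0 : d%:R != 0 :> rat by rewrite pnatr_eq0 -lt0n.
have floor_mod : Num.floor ((m %% d)%:R / d%:R : rat) = 0.
  apply: floor_def; rewrite add0r divr_ge0 ?ler0n //=.
  by rewrite ltr_pdivrMr ?ltr0n // mul1r ltr_nat ltn_mod.
rewrite {1}(divn_eq m d) natrD natrM mulrDl (mulfK d_neq0) /Defs.fracq.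
by rewrite floorDzr ?rpred_nat // floor_mod addr0 (intrKfloor (m %/ d)%N) addrAC subrr add0r.
Qed.

Lemma rk_natr_div (k n : nat) (j : 'I_k) :
  rk (n%:~R / k.+1%:R) j = ((j.+1 * n) %% k.+1)%N%:Z.
Proof.
rewrite /rk mulrA -natrM fracq_natr_div // mulrC divfK ?pnatr_eq0 //.
exact: (intrKfloor ((j.+1 * n) %% k.+1)%N).
Qed.

Lemma modn_between_1_pred (k n : nat) :
  ((1 <= n %% k.+1 <= k.-1) = ~~ (k.+1 %| n) && ~~ (k.+1 %| n.+1))%N.
Proof.
rewrite /dvdn -[n.+1]addn1 -modnDml.
have : (n %% k.+1 <= k)%N by rewrite -ltnS ltn_pmod.
rewrite leq_eqVlt => /orP[/eqP->|lt_k]; first by rewrite addn1 modnn andbF; lia.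
rewrite (modn_small (_ : _ + 1 < k.+1)%N) ?addn1 ?ltnS // andbT -lt0n.
by rewrite (_ : n %% k.+1 <= k.-1)%N ?andbT //; lia.
Qed.

Section FinFieldPowerSums.

Context {F : finFieldType}.
Local Notation q := #|F|.

Let q_gt1 : (1 < q)%N. Proof. exact: finNzRing_gt1. Qed.
Let pred_card_lt : (q.-1 < q)%N. Proof. by rewrite ltn_predL ltnW. Qed.

Lemma natr_card_finField : q%:R = 0 :> F.
Proof. by rewrite -zmodXgE -cardsT expg_cardG ?inE. Qed.

Lemma card_finField_neq0 : #|[pred x : F | x != 0]| = q.-1.
Proof. by rewrite cardC1. Qed.

Lemma expf_card_pred (x : F) : x != 0 -> x ^+ q.-1 = 1.
Proof.
move=> x_neq0; apply: (mulfI x_neq0); rewrite mulr1 -exprS.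
by rewrite prednK ?expf_card // ltnW.
Qed.

Lemma sum_expr_pred_card : \sum_(x : F) x ^+ q.-1 = -1.
Proof.
have q_pred_gt0 : (0 < q.-1)%N by lia.
rewrite (bigD1 0) //= expr0n eqn0Ngt q_pred_gt0 add0r.
rewrite (eq_bigr (fun=> 1)) => [|x /expf_card_pred //].
apply/eqP; rewrite sumr_const card_finField_neq0 -subr_eq0 opprK natr1.
by rewrite prednK ?natr_card_finField //; lia.
Qed.

Lemma exists_expf_neq1 (i : nat) :
  (0 < i < q.-1)%N -> exists2 a : F, a != 0 & a ^+ i != 1.
Proof.
case/andP=> i_gt0 i_lt; apply/exists_inP/contraT => /exists_inPn roots.
have: (size (enum [pred x : F | x != 0%R]) < size ('X^i - 1 : {poly F})%R)%N.
  apply: max_poly_roots; last exact: enum_uniq.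
    by rewrite -size_poly_eq0 size_XnsubC.
  apply/allP => x; rewrite mem_enum => /roots.
  by rewrite negbK /root !hornerE subr_eq0.
by rewrite size_XnsubC // -cardE card_finField_neq0; lia.
Qed.

Lemma sum_expr_eq0 (i : nat) : (0 < i < q.-1)%N -> \sum_(x : F) x ^+ i = 0.
Proof.
move=> /exists_expf_neq1[a a_neq0 ai_neq1].
set S := \sum_(x : F) x ^+ i.
have sum_scale : S = a ^+ i * S.
  rewrite {1}/S (reindex_inj (mulfI a_neq0)) mulr_sumr.
  by apply: eq_bigr => x _; rewrite exprMn.
have : (a ^+ i - 1) * S = 0 by rewrite mulrBl -sum_scale mul1r subrr.
by move/eqP; rewrite mulf_eq0 subr_eq0 (negbTE ai_neq1) => /eqP.
Qed.

Lemma sum_horner_finField (f : {poly F}) :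
  (size f <= q)%N -> \sum_(x : F) f.[x] = - f`_q.-1.
Proof.
move=> size_f; under eq_bigr => x _ do rewrite (horner_coef_wide x size_f).
rewrite exchange_big /= (bigD1 (Ordinal pred_card_lt)) //=.
rewrite -mulr_sumr sum_expr_pred_card mulrN1 big1 ?addr0 // => j j_neq.
have j_lt : (j < q.-1)%N.
  rewrite ltn_neqAle -ltnS prednK ?(ltnW q_gt1) // ltn_ord andbT.
  by apply: contra_neq j_neq => j_eq; apply: val_inj.
rewrite -mulr_sumr; case: (posnP j) => [j_eq0 | j_gt0].
  rewrite (eq_bigr (fun=> 1)) => [|x _]; last by rewrite j_eq0.
  by rewrite sumr_const natr_card_finField mulr0.
by rewrite sum_expr_eq0 ?mulr0 ?j_gt0.
Qed.

Lemma prod_onto_neq0 {I : finType} {g : I -> F} :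
    #|I| = q.-1 -> (forall i, g i != 0) ->
    (forall x, x != 0 -> exists i, g i = x) ->
  \prod_i g i = \prod_(x | x != 0) x.
Proof.
move=> card_I g_neq0 g_onto.
have image_g : g @: I = [set~ 0].
  apply/setP => x; rewrite in_setC1.
  apply/imsetP/idP => [[i _ ->] // | /g_onto[i <-]]; by exists i.
have g_inj : {in I &, injective g}.
  by apply/imset_injP; rewrite image_g cardsC1 card_I.
transitivity (\prod_(x in g @: I) x); first by rewrite big_imset.
by rewrite image_g; apply: eq_bigl => x; rewrite in_setC1.
Qed.

End FinFieldPowerSums.

Section PrimeFieldSlopes.

Context {k : nat}.
Hypothesis k1_prime : prime k.+1.
Local Notation F := 'F_k.+1.

Lemma natr_Fp_eq0 (n : nat) : ((n%:R : F) == 0) = (k.+1 %| n)%N.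
Proof. by rewrite (dvdn_pcharf (pchar_Fp k1_prime)). Qed.

Let mu (j : 'I_k) : F := j.+1%:R.

Let mu_neq0 j : mu j != 0.
Proof. by rewrite /mu natr_Fp_eq0 gtnNdvd ?ltnS. Qed.

Let mu_onto x : x != 0 -> exists j, mu j = x.
Proof.
move=> x_neq0; have x_lt : (x < k.+1)%N by rewrite (leq_trans (ltn_ord x)) ?Fp_cast.
have x_gt0 : (0 < x)%N.
  have : ~~ (k.+1 %| x)%N by rewrite -natr_Fp_eq0 natr_Zp.
  by rewrite lt0n; apply: contraNneq => ->.
have x_pred_lt : (x.-1 < k)%N by rewrite -ltnS prednK.
by exists (Ordinal x_pred_lt); rewrite /mu /= prednK ?natr_Zp.
Qed.

Context {a : 'I_k -> F}.
Hypothesis unavoidable : forall s r : F,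
  exists j, (s * a j + r * mu j == 0) || (s * a j + r * mu j + 1 == 0).

Let W := [set a j / mu j | j : 'I_k].

Lemma prod_sub_nonslope z : z \notin W -> \prod_j (a j - mu j * z) = \prod_j mu j.
Proof.
move=> z_notin.
have g_neq0 j : a j - mu j * z != 0.
  apply: contra z_notin; rewrite subr_eq0 => /eqP a_eq; apply/imsetP; exists j => //.
  by rewrite a_eq [mu j * z]mulrC mulfK.
have card_k : #|'I_k| = #|F|.-1 by rewrite card_ord card_Fp.
rewrite (prod_onto_neq0 card_k g_neq0) ?(prod_onto_neq0 card_k mu_neq0 mu_onto) //.
move=> x x_neq0; have [j] := unavoidable (- x^-1) (x^-1 * z).
have -> : - x^-1 * a j + x^-1 * z * mu j = - x^-1 * (a j - mu j * z) by ring.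
rewrite mulf_eq0 oppr_eq0 invr_eq0 (negbTE x_neq0) (negbTE (g_neq0 j)) /=.
rewrite mulNr addrC subr_eq0 eq_sym => /eqP inv_g; exists j.
by rewrite -(mulVKf x_neq0 (a j - mu j * z)) inv_g mulr1.
Qed.

Lemma prod_XsubC_nonslope (k_even : odd k.+1) z :
  z \notin W -> \prod_j (z - a j / mu j) = 1.
Proof.
move=> z_notin; have := prod_sub_nonslope z z_notin.
have factor j : a j - mu j * z = - mu j * (z - a j / mu j).
  by field; rewrite addrC natr1 mu_neq0.
rewrite (eq_bigr _ (fun j _ => factor j)) big_split /= prodrN card_ord -signr_odd.
move: k_even => /= /negbTE ->; rewrite expr0 mul1r -[RHS]mulr1.
by apply: mulfI; apply/prodf_neq0.
Qed.

Lemma dvdn_succ_card_nonslopes (k_even : odd k.+1) : (k.+1 %| #|~: W|.+1)%N.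
Proof.
pose R := \prod_j ('X - (a j / mu j)%:P).
have size_R : size R = #|F|.
  have size_enum_k : size (index_enum 'I_k) = k.
    by rewrite [index_enum _]unlock -enumT size_enum_ord.
  by rewrite size_prod_XsubC size_enum_k card_Fp.
have lead_R : R`_#|F|.-1 = 1.
  by rewrite -size_R -lead_coefE; apply/monicP/monic_prod_XsubC.
have horner_R z : R.[z] = (z \in ~: W)%:R.
  rewrite horner_prod inE; case: (boolP (z \in W)) => [/imsetP[j _ ->] | z_notin].
    by rewrite (bigD1 j) //= !hornerE subrr mul0r.
  rewrite (eq_bigr (fun j => z - a j / mu j)) => [|j _]; last by rewrite !hornerE.
  by rewrite prod_XsubC_nonslope.
have sum_R : \sum_z R.[z] = #|~: W|%:R.
  rewrite -sumr_const [RHS]big_mkcond; apply: eq_bigr => z _.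
  by rewrite horner_R; case: (z \in ~: W).
move/eqP: (sum_horner_finField R (eq_leq size_R)).
by rewrite lead_R sum_R -subr_eq0 opprK natr1 natr_Fp_eq0.
Qed.

End PrimeFieldSlopes.

Lemma exists_avoid_0_N1 (k : nat) (a : 'I_k -> 'F_k.+1) :
    prime k.+1 -> odd k.+1 -> (exists j, a j = 0) -> (exists j, a j != 0) ->
  exists s r : 'F_k.+1, forall j,
    (s * a j + r * j.+1%:R != 0) && (s * a j + r * j.+1%:R + 1 != 0).
Proof.
move=> k1_prime k_even [j0 a_j0_eq0] [j1 a_j1_neq0].
have [/existsP[s /existsP[r /forallP avoid]] | /existsPn unavoid] := boolP
  [exists s, exists r, [forall j,
    (s * a j + r * j.+1%:R != 0) && (s * a j + r * j.+1%:R + 1 != 0)]].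
  by exists s, r.
exfalso.
have unavoidable s r : exists j,
    (s * a j + r * j.+1%:R == 0) || (s * a j + r * j.+1%:R + 1 == 0).
  have /existsPn/(_ r)/forallPn[j] := unavoid s.
  by rewrite negb_and !negbK; exists j.
set W := [set a j / j.+1%:R | j : 'I_k].
have card_W_le : (#|W| <= k)%N.
  by rewrite (leq_trans (leq_imset_card _ _)) ?card_ord.
have card_W_gt1 : (1 < #|W|)%N.
  apply/card_gt1P; exists (a j0 / j0.+1%:R), (a j1 / j1.+1%:R).
  split; try by apply/imsetP; eexists.
  rewrite a_j0_eq0 mul0r eq_sym mulf_neq0 ?invr_eq0 //.
  by rewrite natr_Fp_eq0 // gtnNdvd ?ltnS.
have card_WC : (#|W| + #|~: W|)%N = k.+1 by rewrite cardsC card_Fp.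
have : (k.+1 %| #|~: W|.+1)%N := dvdn_succ_card_nonslopes k1_prime unavoidable k_even.
by move/(dvdn_leq (ltn0Sn _)); lia.
Qed.

Lemma natr_Fp_Zp_eq0 (k : nat) (x : 'Z_k.+1) :
  prime k.+1 -> (((x : nat)%:R : 'F_k.+1) == 0) = (x == 0).
Proof.
move=> k1_prime; have x_lt : (x < k.+1)%N.
  by rewrite (leq_trans (ltn_ord x)) ?Zp_cast ?prime_gt1.
by rewrite natr_Fp_eq0 // /dvdn modn_small.
Qed.

Theorem lemma4p2 (k : nat) (hk : (0 < k)%N) (hp : prime k.+1) (hodd : odd k.+1)
  (v : 'rV['Z_k.+1]_k) (hv : in_Nk v) :
  exists (s : 'Z_k.+1) (r : int),
    forall j : 'I_k,
      let c := (s *: v + rk_vec k (r%:~R / (k.+1)%:R)) ord0 j in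
      (1 <= (c : nat))%N && ((c : nat) <= k.-1)%N.
Proof.
case: hv => v_neq0 [j0 v_j0_eq0].
pose a j : 'F_k.+1 := (v ord0 j : nat)%:R.
have a_eq0 j : (a j == 0) = (v ord0 j == 0) by rewrite natr_Fp_Zp_eq0.
have [s [r avoid]] : exists s r : 'F_k.+1, forall j,
    (s * a j + r * j.+1%:R != 0) && (s * a j + r * j.+1%:R + 1 != 0).
  apply: exists_avoid_0_N1 => //.
    by exists j0; apply/eqP; rewrite a_eq0 v_j0_eq0.
  have [j v_j_neq0] : exists j, v ord0 j != 0.
    apply/existsP; apply: contraNT v_neq0 => /existsPn v_eq0.
    by apply/eqP/rowP => j; rewrite mxE; apply/eqP/negPn/v_eq0.
  by exists j; rewrite a_eq0.
exists (s : nat)%:R, (r : nat) => j /=.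
rewrite !mxE rk_natr_div -pmulrn Zp_nat_mod ?prime_gt1 //.
rewrite -[v ord0 j]natr_Zp -natrM -natrD val_Zp_nat ?prime_gt1 //.
rewrite modn_between_1_pred -!natr_Fp_eq0 //.
by rewrite -natr1 natrD !natrM !natr_Zp [_ * r]mulrC; apply: avoid.
Qed.
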